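(* Let $G$ be a discriminating group and let $S\subset F$ be a set of weak identities in $G$. Then every element $s\in S$ is an identity in $G$, i.e. $\pi(s)=1$ for every homomorphism $\pi:F\to G$.
   Context: A group $G$ is discriminating if for every integer $N$ and every $h_1,\dots,h_N\in G\times G$ there is a homomorphism $\rho:G\times G\to G$ with $\rho(h_i)=1$ if and only if $h_i=1$, for each $i$. Let $F$ be the free group on countably many generators $g_1,g_2,\dots$. For $N\ge 1$, $F^{\times N}$ is the direct product of $N$ copies of $F$, $i_k:F\to F^{\times N}$ the $k$-th inclusion. A subset $S\subset F$ is a set of weak identities in $G$ if there exists $N\ge1$ such that for any $s_1,\dots,s_N\in S$ and any homomorphism $\rho:F^{\times N}\to G$ some $k$ has $\rho(i_k(s_k))=1$. *)

From mathcomp Require Import all_boot.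
Set Implicit Arguments. Unset Strict Implicit. Unset Printing Implicit Defensive.

Record group := Group {
  gcar :> Type;
  gmul : gcar -> gcar -> gcar;
  gone : gcar;
  ginv : gcar -> gcar;
  gmulA : forall x y z, gmul x (gmul y z) = gmul (gmul x y) z;
  gmul1 : forall x, gmul gone x = x;
  gmulV : forall x, gmul (ginv x) x = gone
}.

Definition hom_prod (G : group) (rho : G * G -> G) : Prop :=
  forall a b : G * G, rho (gmul a.1 b.1, gmul a.2 b.2) = gmul (rho a) (rho b).

Definition discriminating (G : group) : Prop :=
  forall (N : nat) (h : 'I_N -> G * G),
    exists rho : G * G -> G, hom_prod rho /\
      forall i, rho (h i) = gone G <-> h i = (gone G, gone G).

(* Free group on generators indexed by nat: reduced words over letters
   (n, b), where (n, true) is g_n and (n, false) is g_n^-1. *)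
Definition letter := (nat * bool)%type.
Definition canc (a b : letter) : bool := (a.1 == b.1) && (a.2 != b.2).
Definition reduced (w : seq letter) : bool := sorted (fun a b => ~~ canc a b) w.

Record fword := FWord { fw :> seq letter; fw_red : reduced fw }.

Definition push (a : letter) (w : seq letter) : seq letter :=
  match w with
  | [::] => [:: a]
  | b :: w' => if canc a b then w' else a :: w
  end.

Lemma push_reduced a w : reduced w -> reduced (push a w).
Proof.
case: w => [|b w] //= H.
case: ifP => Hc.
  by apply: (path_sorted H).
by rewrite /reduced /= Hc H.
Qed.

Definition norm (w : seq letter) : seq letter := foldr push [::] w.

Lemma norm_reduced w : reduced (norm w).
Proof. by elim: w => [|a w IH] //=; apply: push_reduced. Qed.

Definition fmul (u v : fword) : fword := FWord (norm_reduced (fw u ++ fw v)).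
Definition fone : fword := @FWord [::] isT.

Definition hom_F (G : group) (f : fword -> G) : Prop :=
  forall u v, f (fmul u v) = gmul (f u) (f v).

Definition FN (N : nat) := {ffun 'I_N -> fword}.

Definition hom_FN (G : group) (N : nat) (rho : FN N -> G) : Prop :=
  forall u v : FN N, rho [ffun k => fmul (u k) (v k)] = gmul (rho u) (rho v).

Definition incl (N : nat) (k : 'I_N) (s : fword) : FN N :=
  [ffun j => if j == k then s else fone].

Definition weak_identities (G : group) (S : fword -> Prop) : Prop :=
  exists N : nat, 1 <= N /\
    forall s : 'I_N -> fword, (forall k, S (s k)) ->
      forall rho : FN N -> G, hom_FN rho ->
        exists k : 'I_N, rho (incl k (s k)) = gone G.

(* If [pi s <> 1], discriminate one coordinate at a time: by induction on [n]
   there is a homomorphism [G^n -> G] killing none of the tuples carrying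
   [pi s] in a single slot. Composing it with [pi] coordinatewise gives a
   homomorphism [F^N -> G] that kills no [i_k s], against [S] being a set of
   weak identities. *)
From Stdlib Require Import FunctionalExtensionality Classical.
From mathcomp Require Import all_boot.

Set Implicit Arguments.
Unset Strict Implicit.
Unset Printing Implicit Defensive.

Section GroupTuples.
Variable G : group.
Local Notation "x * y" := (gmul x y).
Local Notation one := (gone G).

Lemma idem_eq1 (y : G) : y * y = y -> y = one.
Proof. by move=> yy; rewrite -(gmulV y) -{3}yy gmulA gmulV gmul1. Qed.

Lemma hom_prod1 (rho : (G * G)%type -> G) : hom_prod rho -> rho (one, one) = one.
Proof. by move=> hom_rho; apply: idem_eq1; rewrite -hom_rho /= gmul1. Qed.

Lemma hom_F1 (pi : fword -> G) : hom_F pi -> pi fone = one.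
Proof.
move=> hom_pi; apply: idem_eq1; rewrite -hom_pi.
by congr pi; congr FWord; apply: eq_irrelevance.
Qed.

Definition hom_tuple (sigma : (nat -> G) -> G) : Prop :=
  forall x y, sigma (fun i => x i * y i) = sigma x * sigma y.

Definition delta (a : G) (k : nat) : nat -> G :=
  fun i => if i == k then a else one.

Lemma delta_outside (a : G) k n : n != k -> delta a k n = one.
Proof. by rewrite /delta => /negbTE ->. Qed.

Lemma discriminating_separates_deltas (a : G) :
  discriminating G -> a <> one -> forall n, exists sigma, hom_tuple sigma /\
    (forall x, (forall i, i < n -> x i = one) -> sigma x = one) /\
    (forall k, k < n -> sigma (delta a k) <> one).
Proof.
move=> discrG a_neq1; elim=> [|n [sigma [hom_sigma [sigma_low sigma_sep]]]].
  by exists (fun=> one); split=> [x y|]; rewrite ?gmul1.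
(* Separate the old witnesses [(sigma (delta a k), 1)] from the new one [(1, a)]. *)
have [rho [hom_rho rho_sep]] := discrG n.+1 (fun i : 'I_n.+1 =>
  if i < n then (sigma (delta a i), one) else (one, a)).
exists (fun x => rho (sigma x, x n)); split; [|split].
- by move=> x y; rewrite hom_sigma -hom_rho.
- move=> x x_low; rewrite sigma_low ?x_low ?hom_prod1 // => i lt_in.
  exact/x_low/ltnW.
- move=> k lt_kn1; have [/= rho_eq1 _] := rho_sep (Ordinal lt_kn1).
  case: ltnP rho_eq1 => [lt_kn|le_nk] rho_eq1 rho_k.
  + rewrite delta_outside ?gtn_eqF // in rho_k.
    exact: (sigma_sep k lt_kn (f_equal fst (rho_eq1 rho_k))).
  + have k_n : k = n by apply/eqP; rewrite eqn_leq le_nk -ltnS lt_kn1.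
    subst k.
    have sigma_dn : sigma (delta a n) = one.
      by apply: sigma_low => i lt_in; rewrite delta_outside ?ltn_eqF.
    rewrite sigma_dn /delta eqxx in rho_k.
    exact: a_neq1 (f_equal snd (rho_eq1 rho_k)).
Qed.

Definition pad N (x : 'I_N -> G) : nat -> G := fun i => oapp x one (insub i).

Lemma pad_mul N (x y : 'I_N -> G) :
  pad (fun k => x k * y k) = fun i => pad x i * pad y i.
Proof.
apply: functional_extensionality => i.
by rewrite /pad; case: insub; rewrite /= ?gmul1.
Qed.

Lemma pad_delta N (x : 'I_N -> G) (a : G) (k : 'I_N) :
  (forall j, x j = if j == k then a else one) -> pad x = delta a k.
Proof.
move=> x_def; apply: functional_extensionality => i; rewrite /pad /delta.
case: insubP => [j _ <- | /negP i_out] /=; first by rewrite x_def.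
by case: eqP => // i_k; case: i_out; rewrite i_k.
Qed.

End GroupTuples.

Theorem theorem6p3 (G : group) (S : fword -> Prop) :
  discriminating G -> weak_identities G S ->
  forall s : fword, S s -> forall pi : fword -> G, hom_F pi -> pi s = gone G.
Proof.
move=> discrG [N [_ weakS]] s Ss pi hom_pi; apply: NNPP => pis_neq1.
have [sigma [hom_sigma [_ sigma_sep]]] :=
  discriminating_separates_deltas discrG pis_neq1 N.
pose rho (u : FN N) := sigma (pad (fun k => pi (u k))).
have hom_rho : hom_FN rho.
  move=> u v; rewrite /rho -hom_sigma -pad_mul.
  congr (sigma (pad _)); apply: functional_extensionality => k.
  by rewrite ffunE hom_pi.
have [k rho_incl] := weakS (fun=> s) (fun=> Ss) rho hom_rho.
apply: (sigma_sep k (ltn_ord k)).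
rewrite -rho_incl /rho (pad_delta (a := pi s) (k := k)) //.
by move=> j; rewrite ffunE; case: eqP; rewrite ?hom_F1.
Qed.
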